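(* Let $P$ be a non-centered convex polyomino, let $c_1$ be its leftmost column, let $Y$ be the row of $P$ containing the bottom cell of $c_1$, and let $T$ be the column of $P$ containing the rightmost cell of $Y$. Then the set $\theta$ of cells of $P$ lying in columns strictly to the right of $T$ is non-empty.
   Context: A cell is a unit square of $\mathbb Z\times\mathbb Z$; a polyomino is a finite connected union of cells with no cut point. A polyomino is convex if its intersection with every vertical and every horizontal line of cells is connected. The minimal bounding rectangle of a convex polyomino is the smallest lattice rectangle containing it; a convex polyomino is centered if at least one of its rows touches both the left and the right side of its minimal bounding rectangle. *)

From mathcomp Require Import all_boot all_order all_algebra.
From mathcomp Require Import finmap.
Set Implicit Arguments. Unset Strict Implicit. Unset Printing Implicit Defensive.
Import Order.TTheory GRing.Theory Num.Theory.
Local Open Scope ring_scope.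
Local Open Scope fset_scope.

(* A cell (x, y) : int * int denotes the unit square [x, x+1] x [y, y+1].
   x = column index (increasing to the right), y = row index (increasing upward). *)
Definition cell := (int * int)%type.

Definition adj (c d : cell) : bool :=
  ((c.1 == d.1) && (`|c.2 - d.2| == 1)) || ((c.2 == d.2) && (`|c.1 - d.1| == 1)).

(* Edge-connectedness of a finite set of cells (this is what "connected union
   of cells with no cut point" amounts to). *)
Definition edge_connected (P : {fset cell}) : Prop :=
  forall c d, c \in P -> d \in P ->
    exists s : seq cell, [/\ path adj c s, last c s = d & all (fun e => e \in P) s].

Definition polyomino (P : {fset cell}) : Prop :=
  P != fset0 /\ edge_connected P.

Definition convex_polyomino (P : {fset cell}) : Prop :=
  polyomino P /\
  (forall x1 x2 x y : int, (x1, y) \in P -> (x2, y) \in P -> x1 <= x <= x2 -> (x, y) \in P) /\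
  (forall y1 y2 x y : int, (x, y1) \in P -> (x, y2) \in P -> y1 <= y <= y2 -> (x, y) \in P).

(* Centered: some row of P touches both the left side (column a = minimal
   column of P) and the right side (column b = maximal column of P) of the
   minimal bounding rectangle. *)
Definition centered (P : {fset cell}) : Prop :=
  exists a b y : int, [/\ (a, y) \in P, (b, y) \in P &
    forall c, c \in P -> a <= c.1 <= b].

From mathcomp Require Import all_boot all_order all_algebra.
From mathcomp Require Import finmap.
Import Order.TTheory GRing.Theory Num.Theory.
Local Open Scope ring_scope.
Local Open Scope fset_scope.

Lemma centered_of_spanning_row {P : {fset cell}} {a b y : int} :
  (a, y) \in P -> (b, y) \in P ->
  (forall c, c \in P -> a <= c.1) -> (forall c, c \in P -> c.1 <= b) ->
  centered P.
Proof. by move=> ayP byP gea leb; exists a, b, y; split=> // c cP; rewrite gea ?leb. Qed.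

Theorem mainTheorem4 (P : {fset cell}) (x0 y0 xT : int) :
  convex_polyomino P -> ~ centered P ->
  (exists y, (x0, y) \in P) -> (forall c, c \in P -> x0 <= c.1) ->
  (x0, y0) \in P -> (forall y, (x0, y) \in P -> y0 <= y) ->
  (xT, y0) \in P -> (forall x, (x, y0) \in P -> x <= xT) ->
  exists c, c \in P /\ xT < c.1.
Proof.
move=> _ notCentered _ geX0 x0y0P _ xTy0P _.
have [/hasP [c cP ltc] | /hasPn leXT] := boolP (has (fun c : cell => xT < c.1) P).
  by exists c.
case: notCentered; apply: (centered_of_spanning_row x0y0P xTy0P geX0).
by move=> c /leXT; rewrite -leNgt.
Qed.
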